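(* Let $\xi\in X^\ast(T)$ be a dominant integral weight and $V_{\mathbb{R}}^\xi:=\{z\in V_{\mathbb{R}}:\lambda(z)\ge\mathrm{val}_L(\gamma_\xi^{dom}(\lambda))\text{ for all }\lambda\in\Lambda\}$. Then $V_{\mathbb{R}}^\xi=\{z\in V_{\mathbb{R}}:(z+\eta_L+\xi_L)^{dom}\le\eta_L+\xi_L\}$.
   Context: $L$ is a finite extension of $\mathbb{Q}_p$, $K$ a complete extension field of $\mathbb{Q}_p$ containing $L$; $|\ |_L$ normalized absolute value of $L$, $\pi_L$ a prime element, $\mathrm{val}_L:K^\times\to\mathbb{R}$ with $\mathrm{val}_L(L^\times)=\mathbb{Z}$. $G$ is the $L$-points of an $L$-split connected reductive group, $T$ a maximal $L$-split torus, $P$ a Borel subgroup containing $T$, $\Phi^+$ the roots positive for $P$, $W=N(T)/T$ acting on $T$ and $\Lambda$ by conjugation, $U_0$ a maximal compact subgroup special for $T$, $\Lambda=T/(U_0\cap T)$, $\lambda:T\to\Lambda$ the projection, $T^{--}=\{t:|\alpha(t)|_L\ge1\ \forall\alpha\in\Phi^+\}$, $\Lambda^{--}=\lambda(T^{--})$. $V_{\mathbb{R}}=\mathrm{Hom}(\Lambda,\mathbb{R})\cong X^\ast(T)\otimes\mathbb{R}$ via $\chi\mapsto\mathrm{val}_L\circ\chi$; $\lambda\in\Lambda$ is viewed as a linear form on $V_{\mathbb{R}}$. Partial order: $z\le z'$ iff $z'-z\in\sum_{\alpha\in\Phi^+}\mathbb{R}_{\ge0}\mathrm{val}_L\circ\alpha$;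 $z^{dom}$ is the unique dominant point in the $W$-orbit of $z$. $\xi_L:=\mathrm{val}_L\circ\xi$, $\eta$ is half the sum of the positive roots in $V_{\mathbb{R}}$, $\eta_L:=[L:\mathbb{Q}_p]\eta$. $\gamma_\xi(w,\lambda(t)):=\big(\prod_{\alpha\in\Phi^+\setminus{}^{w^{-1}}\Phi^+}|\alpha(t)|_L\big)\pi_L^{\mathrm{val}_L(\xi({}^wt))-\mathrm{val}_L(\xi(t))}$, and $\gamma_\xi^{dom}(\lambda):=\gamma_\xi(w,\lambda)$ for any $w$ with ${}^w\lambda\in\Lambda^{--}$. *)

From HB Require Import structures.
From mathcomp Require Import all_boot all_order all_algebra.
From mathcomp Require Import reals.
Set Implicit Arguments. Unset Strict Implicit. Unset Printing Implicit Defensive.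
Import Order.TTheory GRing.Theory Num.Theory.
Local Open Scope ring_scope.

(* X^*(T) and Lambda = T/(U_0 cap T) = X_*(T) are both Z^n = 'rV[int]_n,
   with the perfect pairing <chi, lam> = val_L(chi(t)) for lambda(t) = lam. *)
Definition pairZ (n : nat) (chi lam : 'rV[int]_n) : int :=
  \sum_(i < n) chi 0 i * lam 0 i.

(* lambda in Lambda viewed as a linear form on V_R = Hom(Lambda, R) = 'rV[R]_n *)
Definition pairR (R : realType) (n : nat) (lam : 'rV[int]_n) (z : 'rV[R]_n) : R :=
  \sum_(i < n) (lam 0 i)%:~R * z 0 i.

(* chi |-> val_L o chi, X^*(T) -> V_R *)
Definition embR (R : realType) (n : nat) (chi : 'rV[int]_n) : 'rV[R]_n :=
  map_mx (fun x : int => x%:~R) chi.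

Definition reflX (n : nat) (cor : 'rV[int]_n -> 'rV[int]_n) (a chi : 'rV[int]_n) :=
  chi - pairZ chi (cor a) *: a.
Definition reflL (n : nat) (cor : 'rV[int]_n -> 'rV[int]_n) (a lam : 'rV[int]_n) :=
  lam - pairZ a lam *: cor a.
Definition reflV (R : realType) (n : nat) (cor : 'rV[int]_n -> 'rV[int]_n)
  (a : 'rV[int]_n) (z : 'rV[R]_n) := z - pairR (cor a) z *: embR R a.

(* An element of W is represented by a word in the simple-or-not reflections
   (w = s_{a1} ... s_{ak}); its action on X^*, Lambda, V_R. *)
Definition actX n cor (w : seq 'rV[int]_n) chi := foldr (@reflX n cor) chi w.
Definition actL n cor (w : seq 'rV[int]_n) lam := foldr (@reflL n cor) lam w.
Definition actV (R : realType) n cor (w : seq 'rV[int]_n) (z : 'rV[R]_n) :=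
  foldr (@reflV R n cor) z w.
Definition inW n (Phi : seq 'rV[int]_n) (w : seq 'rV[int]_n) := all (mem Phi) w.

Definition root_datum n (Phi : seq 'rV[int]_n) (cor : 'rV[int]_n -> 'rV[int]_n) :=
  [/\ uniq Phi,
      forall a, a \in Phi -> pairZ a (cor a) = 2,
      forall a b, a \in Phi -> b \in Phi ->
        reflX cor a b \in Phi /\ cor (reflX cor a b) = reflL cor a (cor b)
    & forall a, a \in Phi -> 2%:Z *: a \notin Phi].

(* Phi^+ is the set of roots positive for a Borel P containing T *)
Definition positive_system n (Phi Phip : seq 'rV[int]_n) :=
  uniq Phip /\
  exists f : 'rV[int]_n, (forall a, a \in Phi -> pairZ a f != 0) /\
    (forall a, (a \in Phip) = (a \in Phi) && (0 < pairZ a f)).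

(* Lambda^{--} = lambda(T^{--}): |alpha(t)|_L >= 1, i.e. val_L(alpha(t)) <= 0 *)
Definition antidomL n (Phip : seq 'rV[int]_n) (lam : 'rV[int]_n) :=
  forall a, a \in Phip -> pairZ a lam <= 0.

Definition dominant_int n (Phip : seq 'rV[int]_n) cor (xi : 'rV[int]_n) :=
  forall a, a \in Phip -> 0 <= pairZ xi (cor a).

Definition domV (R : realType) n (Phip : seq 'rV[int]_n) cor (y : 'rV[R]_n) :=
  forall a, a \in Phip -> 0 <= pairR (cor a) y.

Definition leV (R : realType) n (Phip : seq 'rV[int]_n) (z z' : 'rV[R]_n) :=
  exists c : 'I_(size Phip) -> R, (forall i, 0 <= c i) /\
    z' - z = \sum_(i < size Phip) c i *: embR R (Phip`_i).

(* val_L(gamma_xi(w, lambda(t))) where [L:Q_p] = d: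
   val_L(|x|_L) = - d val_L(x) (since |pi_L|_L = q^{-1}, val_L(q) = e f = d),
   Phi^+ \ ^{w^{-1}}Phi^+ = {alpha in Phi^+ | ^w alpha notin Phi^+},
   val_L(xi(^w t)) = <xi, ^w lambda>. *)
Definition val_gamma (R : realType) n (Phip : seq 'rV[int]_n) cor (d : nat) (xi : 'rV[int]_n)
  (w : seq 'rV[int]_n) (lam : 'rV[int]_n) : R :=
  - (d%:R) * (\sum_(a <- Phip | actX cor w a \notin Phip) (pairZ a lam)%:~R)
  + (pairZ xi (actL cor w lam) - pairZ xi lam)%:~R.

(* V_R^xi ; gamma^dom(lambda) := gamma(w,lambda) for any w with ^w lambda in Lambda^{--} *)
Definition V_xi (R : realType) n (Phi Phip : seq 'rV[int]_n) cor (d : nat) (xi : 'rV[int]_n)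
  (z : 'rV[R]_n) :=
  forall (lam : 'rV[int]_n) (w : seq 'rV[int]_n), inW Phi w ->
    antidomL Phip (actL cor w lam) ->
    val_gamma R Phip cor d xi w lam <= pairR lam z.

(* eta = half sum of positive roots, eta_L = d eta *)
Definition etaV (R : realType) n (Phip : seq 'rV[int]_n) : 'rV[R]_n :=
  2^-1 *: \sum_(a <- Phip) embR R a.

(* (y)^dom <= x, with y^dom the (unique) dominant point of the W-orbit of y *)
Definition dom_le (R : realType) n (Phi Phip : seq 'rV[int]_n) cor (y x : 'rV[R]_n) :=
  forall w, inW Phi w -> domV Phip cor (actV cor w y) -> leV Phip (actV cor w y) x.

From HB Require Import structures.
From mathcomp Require Import all_boot all_order all_algebra.
From mathcomp Require Import reals ring lra zify.
Set Implicit Arguments. Unset Strict Implicit. Unset Printing Implicit Defensive.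
Import Order.TTheory GRing.Theory Num.Theory.
Local Open Scope ring_scope.

(* Put x = eta_L + xi_L.  If w lambda is antidominant, the positive roots that
   w makes negative are those on which lambda is positive, and the W-invariance
   of sum_{alpha in Phi} |<alpha, lambda>| turns val_L(gamma_xi(w, lambda)) into
   <w lambda, x> - <lambda, x>.  With nu = w lambda and y = z + x, z lies in
   V^xi iff <nu, w y> >= <nu, x> for all w in W and all antidominant nu.
   Reflecting in simple roots that pair negatively with y walks y up to a
   dominant point of its orbit, so for antidominant nu the pairing <nu, w y> is
   smallest at y^dom.  Finally a vector pairs nonpositively with every
   antidominant coweight iff it is a nonnegative combination of positive roots:
   this is Farkas' lemma for the simple roots, which are linearly independent
   because they are pairwise obtuse for the W-invariant form, combined with the
   density of antidominant coweights among antidominant directions.  Hence the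
   condition says y^dom <= x. *)

Lemma perm_map_stable (T : eqType) (g : T -> T) (s : seq T) :
  uniq s -> injective g -> {in s, forall x, g x \in s} -> perm_eq (map g s) s.
Proof.
move=> us ig sg; have ums : uniq (map g s) by rewrite map_inj_uniq.
have sub : {subset map g s <= s} by move=> _ /mapP [y ys ->]; exact: sg.
have [_ e] := uniq_min_size ums sub (eq_leq (esym (size_map g s))).
exact: uniq_perm.
Qed.

Lemma int_dvd4 (p q : int) : p * q = 4 -> 0 < p -> [\/ p = 1, p = 2 | p = 4].
Proof.
move=> h hp; have hq : 0 < q by rewrite -(pmulr_rgt0 _ hp) h.
have : p <= 4 by rewrite -h ler_peMr // ?ltW //; lia.
case: p h hp => // [[|[|[|[|[|m]]]]]] // h _ _; try lia; by constructor.
Qed.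

Section RowDot.
Variables (R : realType) (n : nat).
Local Notation V := 'rV[R]_n.

Definition vdot (u v : V) : R := \sum_(i < n) u 0 i * v 0 i.

Lemma vdotC u v : vdot u v = vdot v u.
Proof. by apply: eq_bigr => i _; rewrite mulrC. Qed.

Fact vdot_is_linear u : linear_for *%R (vdot u).
Proof.
move=> k v w; rewrite /vdot mulr_sumr -big_split; apply: eq_bigr => i _.
by rewrite !mxE mulrDr mulrCA.
Qed.

End RowDot.

HB.instance Definition _ (R : realType) (n : nat) (u : 'rV[R]_n) :=
  GRing.isLinear.Build R 'rV[R]_n R *%R (vdot u) (vdot_is_linear u).

Section RowDotTheory.
Variables (R : realType) (n : nat).
Local Notation V := 'rV[R]_n.
Local Notation X := 'rV[int]_n.

Lemma vdot0l (w : V) : vdot 0 w = 0.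
Proof. by rewrite vdotC linear0. Qed.
Lemma vdotDl (u v w : V) : vdot (u + v) w = vdot u w + vdot v w.
Proof. by rewrite vdotC linearD /= !(vdotC w). Qed.
Lemma vdotZl k (u w : V) : vdot (k *: u) w = k * vdot u w.
Proof. by rewrite vdotC linearZ /= vdotC. Qed.
Lemma vdotNl (u w : V) : vdot (- u) w = - vdot u w.
Proof. by rewrite vdotC linearN /= vdotC. Qed.
Lemma vdotBl (u v w : V) : vdot (u - v) w = vdot u w - vdot v w.
Proof. by rewrite vdotDl vdotNl. Qed.

Lemma vdot_suml (I : Type) (s : seq I) (P : pred I) (F : I -> V) w :
  vdot (\sum_(i <- s | P i) F i) w = \sum_(i <- s | P i) vdot (F i) w.
Proof. by rewrite vdotC linear_sum; apply: eq_bigr => i _; rewrite vdotC. Qed.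

Lemma vdot_self_eq0 (u : V) : vdot u u = 0 -> u = 0.
Proof.
rewrite /vdot => /eqP; rewrite psumr_eq0 => [/allP hu|i _]; last first.
  by rewrite -expr2 sqr_ge0.
apply/rowP => i; have /= := hu i (mem_index_enum _).
by rewrite mxE mulf_eq0 orbb => /eqP.
Qed.

Lemma vdot_row_mx (m : nat) (u : V) (M : 'M[R]_(n, m)) j :
  vdot u (\row_l M l j) = (u *m M) 0 j.
Proof. by rewrite /vdot mxE; apply: eq_bigr => l _; rewrite mxE. Qed.

Lemma embRD (a b : X) : embR R (a + b) = embR R a + embR R b.
Proof. exact: map_mxD. Qed.
Lemma embRN (a : X) : embR R (- a) = - embR R a.
Proof. exact: map_mxN. Qed.
Lemma embRB (a b : X) : embR R (a - b) = embR R a - embR R b.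
Proof. exact: map_mxB. Qed.
Lemma embRZ (k : int) (a : X) : embR R (k *: a) = k%:~R *: embR R a.
Proof. exact: map_mxZ. Qed.
Lemma embR_inj : injective (embR R (n := n)).
Proof.
move=> a b e; apply/rowP => i; apply: (@intr_inj R).
by have := congr1 (fun v : V => v 0 i) e; rewrite !mxE.
Qed.

Definition l1norm (u : V) : R := \sum_(i < n) `|u 0 i|.

Lemma l1norm_ge0 (u : V) : 0 <= l1norm u.
Proof. exact: sumr_ge0. Qed.

Definition floor_row (k : V) : X := \row_i Num.floor (k 0 i).

Lemma vdot_floor_row (u k : V) : `|vdot u (embR R (floor_row k)) - vdot u k| <= l1norm u.
Proof.
rewrite -linearB; apply: le_trans (ler_norm_sum _ _ _) _; apply: ler_sum => i _.
rewrite !mxE normrM ler_piMr // ler_norml; have := floor_le (k 0 i).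
by have := floorD1_gt (k 0 i); rewrite intrD; lra.
Qed.

Lemma pairRE (lam : X) z : pairR lam z = vdot (embR R lam) z.
Proof. by apply: eq_bigr => i _; rewrite mxE. Qed.
Lemma pairRD (lam : X) (u v : V) : pairR lam (u + v) = pairR lam u + pairR lam v.
Proof. by rewrite !pairRE linearD. Qed.
Lemma pairZE (a b : X) : (pairZ a b)%:~R = vdot (embR R a) (embR R b).
Proof. by rewrite rmorph_sum; apply: eq_bigr => i _; rewrite !mxE rmorphM. Qed.

End RowDotTheory.

Lemma pairZC n (a b : 'rV[int]_n) : pairZ a b = pairZ b a.
Proof. by apply: eq_bigr => i _; rewrite mulrC. Qed.
Lemma pairZDl n (a b l : 'rV[int]_n) : pairZ (a + b) l = pairZ a l + pairZ b l.
Proof. by rewrite /pairZ -big_split; apply: eq_bigr => i _; rewrite mxE mulrDl. Qed.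
Lemma pairZNl n (a l : 'rV[int]_n) : pairZ (- a) l = - pairZ a l.
Proof. by rewrite /pairZ -sumrN; apply: eq_bigr => i _; rewrite mxE mulNr. Qed.

Section Wform.
Variables (R : realType) (n : nat) (Phi : seq 'rV[int]_n).
Local Notation V := 'rV[R]_n.
Local Notation X := 'rV[int]_n.

Definition Wform (F : X -> V) (u v : V) : R :=
  \sum_(c <- Phi) vdot (F c) u * vdot (F c) v.

Lemma WformC (F : X -> V) (u v : V) : Wform F u v = Wform F v u.
Proof. by apply: eq_bigr => c _; rewrite mulrC. Qed.

Fact Wform_is_linear F u : linear_for *%R (Wform F u).
Proof.
move=> k v w; rewrite /Wform mulr_sumr -big_split; apply: eq_bigr => c _.
by rewrite linearP /= mulrDr mulrCA.
Qed.
End Wform.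

HB.instance Definition _ (R : realType) (n : nat) (Phi : seq 'rV[int]_n) F u :=
  GRing.isLinear.Build R 'rV[R]_n R *%R (Wform Phi F u) (Wform_is_linear Phi F u).

Section WformTheory.
Variables (R : realType) (n : nat) (Phi : seq 'rV[int]_n).
Local Notation V := 'rV[R]_n.
Local Notation X := 'rV[int]_n.
Local Notation Wform := (Wform Phi).

Lemma Wform_ge_sqr (F : X -> V) (u : V) c : c \in Phi -> vdot (F c) u ^+ 2 <= Wform F u u.
Proof.
move=> hc; rewrite /Wform (perm_big _ (perm_to_rem hc)) big_cons -expr2 lerDl.
by apply: sumr_ge0 => i _; rewrite -expr2 sqr_ge0.
Qed.
Lemma Wform_ge0 (F : X -> V) (u : V) : 0 <= Wform F u u.
Proof. by apply: sumr_ge0 => c _; rewrite -expr2 sqr_ge0. Qed.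
Lemma Wform_sub_sqr (F : X -> V) (u v : V) :
  Wform F (u - v) (u - v) = Wform F u u - 2 * Wform F u v + Wform F v v.
Proof.
rewrite /Wform mulr_sumr -sumrB -big_split; apply: eq_bigr => c _ /=.
by rewrite !linearB /=; ring.
Qed.
Lemma Wform_eq0 (F : X -> V) (u : V) : Wform F u u = 0 -> {in Phi, forall c, vdot (F c) u = 0}.
Proof.
move=> h0 c hc; apply/eqP; rewrite -sqrf_eq0 eq_le sqr_ge0 andbT -h0.
exact: Wform_ge_sqr.
Qed.

Lemma Wform_perm (F : X -> V) (g : X -> X) (s : V -> V) u v :
  perm_eq (map g Phi) Phi ->
  (forall c x, c \in Phi -> vdot (F c) (s x) = vdot (F (g c)) x) ->
  Wform F (s u) (s v) = Wform F u v.
Proof.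
move=> pg hs; rewrite /Wform -[in RHS](perm_big _ pg) big_map.
by apply: eq_big_seq => c hc; rewrite !hs.
Qed.

Lemma Wform_reflection (F : X -> V) (u e : V) p :
  Wform F (u - p *: e) (- e) = Wform F u e -> p * Wform F e e = 2 * Wform F u e.
Proof.
rewrite raddfN /= WformC linearB linearZ /= (WformC Phi F e u) => h.
by rewrite mulr_natl mulr2n -{2}h opprB addrC subrK.
Qed.

End WformTheory.

(** * Root data: reflections and invariant forms *)

Section RootDatum.
Variables (R : realType) (n : nat) (Phi : seq 'rV[int]_n) (cor : 'rV[int]_n -> 'rV[int]_n).
Hypothesis rd : root_datum Phi cor.
Local Notation V := 'rV[R]_n.
Local Notation X := 'rV[int]_n.
Local Notation ev a := (embR R a).
Local Notation cv a := (embR R (cor a)).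

Definition corefl (a : X) (k : V) : V := k - vdot (ev a) k *: cv a.

Lemma uniq_roots : uniq Phi.
Proof. by case: rd. Qed.
Lemma root_coroot a : a \in Phi -> vdot (ev a) (cv a) = 2.
Proof. by case: rd => _ h _ _ /h; rewrite -pairZE => ->. Qed.
Lemma reflX_root a b : a \in Phi -> b \in Phi -> reflX cor a b \in Phi.
Proof. by case: rd => _ _ h _ ha hb; case: (h a b ha hb). Qed.
Lemma cor_reflX a b : a \in Phi -> b \in Phi -> cor (reflX cor a b) = reflL cor a (cor b).
Proof. by case: rd => _ _ h _ ha hb; case: (h a b ha hb). Qed.

Lemma reflVE a u : reflV cor a u = u - vdot (cv a) u *: ev a.
Proof. by rewrite /reflV pairRE. Qed.
Lemma vdot_coroot_root a b : vdot (cv b) (ev a) = (pairZ a (cor b))%:~R.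
Proof. by rewrite pairZE vdotC. Qed.
Lemma embR_reflX a b : ev (reflX cor a b) = reflV cor a (ev b).
Proof. by rewrite reflVE embRB embRZ pairZE vdotC. Qed.
Lemma embR_reflL a l : embR R (reflL cor a l) = corefl a (embR R l).
Proof. by rewrite /corefl embRB embRZ pairZE. Qed.

Lemma vdot_reflV k a u : vdot k (reflV cor a u) = vdot (corefl a k) u.
Proof.
rewrite reflVE /corefl [LHS]linearB [RHS]vdotC [RHS]linearB !linearZ /=.
by rewrite (vdotC k u) (vdotC k (ev a)) (vdotC u (cv a)) mulrC.
Qed.
Lemma vdot_ev_corefl c a k : vdot (ev c) (corefl a k) = vdot (ev (reflX cor a c)) k.
Proof. by rewrite embR_reflX [RHS]vdotC vdot_reflV vdotC. Qed.
Lemma vdot_cv_reflV a b u : a \in Phi -> b \in Phi ->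
  vdot (cv b) (reflV cor a u) = vdot (cv (reflX cor a b)) u.
Proof. by move=> ha hb; rewrite vdot_reflV cor_reflX // embR_reflL. Qed.

Lemma reflX_self a : a \in Phi -> reflX cor a a = - a.
Proof.
move=> ha; apply: (@embR_inj R); rewrite embR_reflX embRN reflVE.
by rewrite (vdotC (cv a)) root_coroot // scaler_nat mulr2n opprD addrA subrr sub0r.
Qed.
Lemma corefl_coroot a : a \in Phi -> corefl a (cv a) = - cv a.
Proof.
by move=> ha; rewrite /corefl root_coroot // scaler_nat mulr2n opprD addrA subrr sub0r.
Qed.

Lemma reflVK a : a \in Phi -> involutive (reflV cor a : V -> V).
Proof.
move=> ha u; rewrite [LHS]reflVE vdot_reflV corefl_coroot // vdotNl.
by rewrite reflVE scaleNr opprK subrK.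
Qed.
Lemma coreflK a : a \in Phi -> involutive (corefl a).
Proof.
move=> ha k; rewrite [LHS]/corefl vdot_ev_corefl reflX_self // embRN vdotNl.
by rewrite /corefl scaleNr opprK subrK.
Qed.
Lemma reflXK a : a \in Phi -> involutive (reflX cor a).
Proof. by move=> ha b; apply: (@embR_inj R); rewrite !embR_reflX reflVK. Qed.
Lemma reflLK a : a \in Phi -> involutive (reflL cor a).
Proof. by move=> ha l; apply: (@embR_inj R); rewrite !embR_reflL coreflK. Qed.

Lemma perm_reflX a : a \in Phi -> perm_eq (map (reflX cor a) Phi) Phi.
Proof.
move=> ha; apply: perm_map_stable uniq_roots (inv_inj (reflXK ha)) _.
by move=> b; apply: reflX_root.
Qed.

Lemma opp_root a : a \in Phi -> - a \in Phi.
Proof. by move=> ha; rewrite -reflX_self // reflX_root. Qed.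

Lemma root_proportional a b c : a \in Phi -> b \in Phi -> ev b = c *: ev a -> 0 <= c -> b = a.
Proof.
move=> ha hb e hc.
have eP : (pairZ b (cor a))%:~R = c * 2 :> R by rewrite pairZE e vdotZl root_coroot.
have eQ : 2 = c * (pairZ a (cor b))%:~R :> R by rewrite pairZE -(root_coroot hb) e vdotZl.
have e4 : pairZ b (cor a) * pairZ a (cor b) = 4.
  by apply: (@intr_inj R); rewrite intrM eP -mulrA mulrCA -eQ; lra.
have hpos : 0 < pairZ b (cor a).
  rewrite lt_neqAle -(ler_int R) eP mulr_ge0 // andbT.
  by apply/eqP => h; rewrite -h mul0r in e4.
have reduced x : x \in Phi -> 2%:Z *: x \notin Phi by case: rd => _ _ _; apply.
case: (int_dvd4 e4 hpos) => h; rewrite h in eP.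
- have /embR_inj ea : ev a = ev (2%:Z *: b).
    by rewrite embRZ e scalerA (_ : _ * c = 1) ?scale1r //; lra.
  by have := reduced _ hb; rewrite -ea ha.
- by apply: (@embR_inj R); rewrite e (_ : c = 1) ?scale1r //; lra.
- have /embR_inj eb : ev b = ev (2%:Z *: a) by rewrite embRZ e; congr (_ *: _); lra.
  by have := reduced _ ha; rewrite -eb hb.
Qed.

Lemma embR_actX w b : ev (actX cor w b) = actV cor w (ev b).
Proof. by elim: w => //= a w IH; rewrite embR_reflX IH. Qed.
Lemma embR_actL w l : embR R (actL cor w l) = foldr corefl (embR R l) w.
Proof. by elim: w => //= a w IH; rewrite embR_reflL IH. Qed.
Lemma actX_root w b : inW Phi w -> b \in Phi -> actX cor w b \in Phi.
Proof. by elim: w => //= a w IH /andP [ha hw] hb; exact: reflX_root (IH hw hb). Qed.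
Lemma vdot_act w k u : inW Phi w -> vdot (foldr corefl k w) (actV cor w u) = vdot k u.
Proof.
elim: w => //= a w IH /andP [ha hw].
by rewrite vdot_reflV coreflK // IH.
Qed.
Lemma pairR_act w l (z : V) : inW Phi w -> pairR (actL cor w l) (actV cor w z) = pairR l z.
Proof. by move=> hw; rewrite !pairRE embR_actL vdot_act. Qed.
Lemma pairZ_act w a l : inW Phi w -> pairZ (actX cor w a) (actL cor w l) = pairZ a l.
Proof.
move=> hw; apply: (@intr_inj R).
by rewrite !pairZE embR_actL embR_actX vdotC vdot_act // vdotC.
Qed.
Lemma perm_actX w : inW Phi w -> perm_eq (map (actX cor w) Phi) Phi.
Proof.
elim: w => /= [|a w IH /andP [ha hw]]; first by rewrite map_id.
rewrite (map_comp (reflX cor a) (actX cor w)).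
exact: perm_trans (perm_map _ (IH hw)) (perm_reflX ha).
Qed.
Lemma actL_revK w l : inW Phi w -> actL cor w (actL cor (rev w) l) = l.
Proof.
elim: w l => //= a w IH l /andP [ha hw].
by rewrite rev_cons -cats1 /actL foldr_cat /= -/(actL cor w _) -/(actL cor (rev w) _) IH // reflLK.
Qed.
Lemma sum_abs_pairing_act w lam : inW Phi w ->
  \sum_(a <- Phi) `|pairZ a (actL cor w lam)| = \sum_(a <- Phi) `|pairZ a lam|.
Proof.
move=> hw; rewrite -[in LHS](perm_big _ (perm_actX hw)) big_map.
by apply: eq_bigr => a _; rewrite pairZ_act.
Qed.

Local Notation formV := (Wform Phi (fun c => cv c)).
Local Notation formL := (Wform Phi (fun c => ev c)).

Lemma formV_coroot a u : a \in Phi -> vdot (cv a) u * formV (ev a) (ev a) = 2 * formV u (ev a).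
Proof.
move=> ha; apply: Wform_reflection; rewrite -reflVE -embRN -reflX_self // embR_reflX.
by apply: Wform_perm (perm_reflX ha) _ => c v hc; rewrite vdot_cv_reflV.
Qed.
Lemma formL_root a k : a \in Phi -> vdot (ev a) k * formL (cv a) (cv a) = 2 * formL k (cv a).
Proof.
move=> ha; apply: Wform_reflection.
rewrite -corefl_coroot // -[k - _ *: _]/(corefl a k).
by apply: Wform_perm (perm_reflX ha) _ => c v hc; rewrite vdot_ev_corefl.
Qed.

Lemma formV_root_gt0 a : a \in Phi -> 0 < formV (ev a) (ev a).
Proof.
move=> ha; apply: lt_le_trans (Wform_ge_sqr _ _ ha).
by rewrite vdotC root_coroot //; lra.
Qed.
Lemma formL_coroot_gt0 a : a \in Phi -> 0 < formL (cv a) (cv a).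
Proof.
move=> ha; apply: lt_le_trans (Wform_ge_sqr _ _ ha).
by rewrite root_coroot //; lra.
Qed.

Definition root_span (u : V) := exists s : seq (R * X),
  all (fun p => p.2 \in Phi) s /\ u = \sum_(p <- s) p.1 *: ev p.2.

Lemma root_span_root a : a \in Phi -> root_span (ev a).
Proof. by move=> ha; exists [:: (1, a)]; rewrite /= ha big_seq1 scale1r. Qed.
Lemma root_spanD u v : root_span u -> root_span v -> root_span (u + v).
Proof.
move=> [s [hs ->]] [t [ht ->]]; exists (s ++ t).
by rewrite all_cat hs ht big_cat.
Qed.
Lemma root_spanZ k u : root_span u -> root_span (k *: u).
Proof.
move=> [s [hs ->]]; exists [seq (k * p.1, p.2) | p <- s]; rewrite all_map.
split; first exact: sub_all hs.
by rewrite big_map scaler_sumr; apply: eq_bigr => p _; rewrite scalerA.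
Qed.
Lemma root_span_sum (I : Type) (s : seq I) (G : I -> V) :
  (forall i, root_span (G i)) -> root_span (\sum_(i <- s) G i).
Proof.
move=> hG; elim/big_rec: _ => [|i y _]; last exact: root_spanD.
by exists [::]; rewrite big_nil.
Qed.

Lemma vdot_root_formL a k : a \in Phi ->
  vdot (ev a) k = formL k ((2 / formL (cv a) (cv a)) *: cv a).
Proof.
move=> ha; have hpos := formL_coroot_gt0 ha.
by rewrite linearZ /= mulrAC -formL_root // mulfK // gt_eqF.
Qed.

(* Under [formL] each root is represented by a multiple of its coroot, so
   [vdot u] is represented by a combination [kap] of coroots; then
   [formL kap kap = vdot u kap = 0] forces [formL _ kap = 0]. *)
Lemma root_span_coroot_eq0 u : root_span u -> {in Phi, forall b, vdot (cv b) u = 0} -> u = 0.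
Proof.
move=> [s [hs eu]] hu.
have hsP p : p \in s -> p.2 \in Phi by move/allP: hs => /(_ p).
pose kap := \sum_(p <- s) p.1 *: ((2 / formL (cv p.2) (cv p.2)) *: cv p.2).
have vdot_u k : vdot u k = formL k kap.
  rewrite eu vdot_suml /kap linear_sum; apply: eq_big_seq => p hp.
  by rewrite vdotZl vdot_root_formL ?hsP // !linearZ.
have kap0 : formL kap kap = 0.
  rewrite -vdot_u vdotC /kap vdot_suml big1_seq // => p /andP [_ hp].
  by rewrite !vdotZl hu ?hsP // !mulr0.
apply: vdot_self_eq0; rewrite vdot_u /Wform big1_seq // => c /andP [_ hc].
by rewrite (Wform_eq0 kap0 hc) mulr0.
Qed.

Lemma formV_anisotropic u : root_span u -> formV u u = 0 -> u = 0.
Proof. by move=> hu /Wform_eq0; apply: root_span_coroot_eq0. Qed.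

(** * Positive and simple roots *)

Section PositiveSystem.
Variables (Phip : seq X) (f : X).
Hypothesis uniq_pos : uniq Phip.
Hypothesis root_f_neq0 : {in Phi, forall a, pairZ a f != 0}.
Hypothesis pos_rootE : forall a, (a \in Phip) = (a \in Phi) && (0 < pairZ a f).

Lemma pos_root_root a : a \in Phip -> a \in Phi.
Proof. by rewrite pos_rootE => /andP []. Qed.
Lemma pos_root_f_gt0 a : a \in Phip -> 0 < pairZ a f.
Proof. by rewrite pos_rootE => /andP []. Qed.
Lemma root_pos_or_neg a : a \in Phi -> (a \in Phip) || (- a \in Phip).
Proof.
move=> ha; rewrite !pos_rootE ha opp_root //= pairZNl oppr_gt0.
by have := root_f_neq0 ha; case: ltgtP.
Qed.
Lemma pos_rootN a : a \in Phip -> (- a \in Phip) = false.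
Proof. by move=> /pos_root_f_gt0 h; rewrite pos_rootE pairZNl oppr_gt0 ltNge (ltW h) andbF. Qed.

Lemma perm_roots_pos_neg : perm_eq Phi (Phip ++ map -%R Phip).
Proof.
apply: uniq_perm uniq_roots _ _.
  rewrite cat_uniq uniq_pos (map_inj_uniq oppr_inj) uniq_pos andbT /=.
  by apply/hasPn => _ /mapP [b hb ->]; rewrite /= pos_rootN.
move=> a; rewrite mem_cat; apply/idP/orP => [ha|].
  case/orP: (root_pos_or_neg ha) => [|h]; [by left | right].
  by apply/mapP; exists (- a); rewrite ?opprK.
by case=> [/pos_root_root //|/mapP [b /pos_root_root hb ->]]; apply: opp_root.
Qed.

Definition simple_roots := [seq a <- Phip | ~~ has (fun b => a - b \in Phip) Phip].
Local Notation Delta := simple_roots.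
Local Notation r := (size Delta).

Lemma simple_pos a : a \in Delta -> a \in Phip.
Proof. by rewrite mem_filter => /andP []. Qed.
Lemma simple_root a : a \in Delta -> a \in Phi.
Proof. by move/simple_pos/pos_root_root. Qed.
Lemma simple_nth_root (i : 'I_r) : Delta`_i \in Phi.
Proof. exact/simple_root/mem_nth. Qed.

Definition simple_cone (u : V) := exists2 k : 'I_r -> R,
  (forall i, 0 <= k i) & u = \sum_(i < r) k i *: ev Delta`_i.

Lemma simple_coneD u v : simple_cone u -> simple_cone v -> simple_cone (u + v).
Proof.
move=> [k hk ->] [l hl ->]; exists (fun i => k i + l i) => [i|].
  by rewrite addr_ge0.
by rewrite -big_split; apply: eq_bigr => i _; rewrite scalerDl.
Qed.
Lemma simple_cone_simple a : a \in Delta -> simple_cone (ev a).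
Proof.
move=> ha; have hi : (index a Delta < r)%N by rewrite index_mem.
exists (fun i => (i == Ordinal hi)%:R) => [i|]; first exact: ler0n.
rewrite (bigD1 (Ordinal hi)) //= eqxx scale1r nth_index // big1 ?addr0 //.
by move=> i /negbTE ->; rewrite scale0r.
Qed.

(* Induction on the height [pairZ a f]: a positive root that is not simple is
   the sum of two positive roots of smaller height. *)
Lemma pos_root_simple_cone a : a \in Phip -> simple_cone (ev a).
Proof.
move: {2}(absz (pairZ a f)).+1 (ltnSn (absz (pairZ a f))) => N.
elim: N a => // N IH a hN ha.
case hD: (a \in Delta); first exact: simple_cone_simple.
move: hD; rewrite mem_filter ha andbT => /negbFE /hasP [b hb hab].
have -> : ev a = ev b + ev (a - b) by rewrite -embRD addrC subrK.
have e : pairZ a f = pairZ b f + pairZ (a - b) f by rewrite -pairZDl addrC subrK.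
have [hbN habN] : (`|pairZ b f| < N)%N /\ (`|pairZ (a - b) f| < N)%N.
  move: hN (pos_root_f_gt0 hb) (pos_root_f_gt0 hab); rewrite e.
  by move: (pairZ b f) (pairZ (a - b) f) => x y; lia.
by apply: simple_coneD; [apply: IH hbN hb | apply: IH habN hab].
Qed.

Lemma simple_pairing_neq1 a b : a \in Delta -> b \in Delta -> pairZ a (cor b) != 1.
Proof.
move=> ha hb; apply/eqP => h.
have : reflX cor b a \in Phi by rewrite reflX_root ?simple_root.
rewrite /reflX h scale1r => /root_pos_or_neg/orP [] hab.
  by move: ha; rewrite mem_filter => /andP [/hasPn /(_ b (simple_pos hb))]; rewrite hab.
by move: hb; rewrite mem_filter => /andP [/hasPn /(_ a (simple_pos ha))]; rewrite -opprB hab.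
Qed.

Lemma simple_formV_le a b : a \in Delta -> b \in Delta ->
  0 < formV (ev a) (ev b) -> formV (ev b) (ev b) <= formV (ev a) (ev b).
Proof.
move=> ha hb hab; have hB := formV_root_gt0 (simple_root hb).
have e := formV_coroot (ev a) (simple_root hb); rewrite vdot_coroot_root in e.
have hp : 0 < pairZ a (cor b) by rewrite -(ltr0z R) -(pmulr_lgt0 _ hB) e mulr_gt0.
have hp2 : 2 <= (pairZ a (cor b))%:~R :> R.
  rewrite (ler_int R 2); move: hp (simple_pairing_neq1 ha hb).
  by move: (pairZ a (cor b)) => p; lia.
by rewrite -(ler_pM2l (ltr0n R 2)) -e ler_pM2r.
Qed.

Lemma simple_roots_obtuse a b : a \in Delta -> b \in Delta -> a != b ->
  formV (ev a) (ev b) <= 0.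
Proof.
move=> ha hb hab; rewrite leNgt; apply/negP => hpos.
have h1 := simple_formV_le ha hb hpos.
have h2 : formV (ev a) (ev a) <= formV (ev a) (ev b).
  by rewrite (WformC _ _ (ev a) (ev b)); apply: simple_formV_le; rewrite // WformC.
have hsp : root_span (ev a - ev b).
  by rewrite -scaleN1r; apply: root_spanD; [|apply: root_spanZ]; apply/root_span_root/simple_root.
suff /(formV_anisotropic hsp)/eqP : formV (ev a - ev b) (ev a - ev b) = 0.
  by rewrite subr_eq0 => /eqP /embR_inj eab; rewrite eab eqxx in hab.
apply/eqP; rewrite eq_le Wform_ge0 andbT Wform_sub_sqr; lra.
Qed.

Lemma simple_comb_ge0_eq0 (c : 'I_r -> R) : (forall i, 0 <= c i) ->
  \sum_(i < r) c i *: ev Delta`_i = 0 -> forall i, c i = 0.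
Proof.
move=> hc /(congr1 (fun w => vdot w (ev f))); rewrite vdot_suml vdot0l => /eqP.
have hf (i : 'I_r) : 0 < vdot (ev Delta`_i) (ev f).
  by rewrite -pairZE ltr0z pos_root_f_gt0 // simple_pos // mem_nth.
rewrite psumr_eq0 => [/allP h i|]; last by move=> i _; rewrite vdotZl mulr_ge0 ?hc ?ltW.
by have /= := h i (mem_index_enum _); rewrite vdotZl mulf_eq0 (gt_eqF (hf i)) orbF => /eqP.
Qed.

Lemma simple_formV_le0 (c d : 'I_r -> R) : (forall i, 0 <= c i) -> (forall i, 0 <= d i) ->
  (forall i, c i * d i = 0) ->
  formV (\sum_(i < r) c i *: ev Delta`_i) (\sum_(j < r) d j *: ev Delta`_j) <= 0.
Proof.
move=> hc hd hcd; rewrite linear_sum /=; apply: sumr_le0 => j _.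
rewrite linearZ /= WformC linear_sum mulr_sumr /=; apply: sumr_le0 => i _.
rewrite linearZ /= mulrCA; have [<-|hij] := eqVneq i j; first by rewrite mulrA hcd mul0r.
rewrite mulr_ge0_le0 ?hc // mulr_ge0_le0 ?hd // simple_roots_obtuse ?mem_nth //.
by rewrite nth_uniq ?filter_uniq // eq_sym.
Qed.

Lemma simple_roots_free (k : 'I_r -> R) :
  \sum_(i < r) k i *: ev Delta`_i = 0 -> forall i, k i = 0.
Proof.
move=> hk.
pose kp i := if 0 <= k i then k i else 0; pose km i := if 0 <= k i then 0 else - k i.
have ek i : k i = kp i - km i by rewrite /kp /km; case: ifP; rewrite ?subr0 ?opprK ?add0r.
have kp0 i : 0 <= kp i by rewrite /kp; case: ifP.
have km0 i : 0 <= km i by rewrite /km; case: (lerP 0 (k i)) => // /ltW; rewrite oppr_ge0.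
have kpm i : kp i * km i = 0 by rewrite /kp /km; case: ifP; rewrite ?mulr0 ?mul0r.
pose P := \sum_(i < r) kp i *: ev Delta`_i; pose Q := \sum_(i < r) km i *: ev Delta`_i.
have ePQ : P = Q.
  apply/eqP; rewrite -subr_eq0 -hk /P /Q -sumrB; apply/eqP/eq_bigr => i _.
  by rewrite -scalerBl -ek.
have P0 : P = 0.
  apply: formV_anisotropic.
    by apply: root_span_sum => i; apply/root_spanZ/root_span_root/simple_nth_root.
  apply/eqP; rewrite eq_le Wform_ge0 andbT {2}ePQ.
  exact: simple_formV_le0.
move=> i; rewrite ek (simple_comb_ge0_eq0 kp0 P0) (simple_comb_ge0_eq0 km0 (etrans (esym ePQ) P0)).
by rewrite subr0.
Qed.

Lemma simple_cone_ray (j : 'I_r) u v t : simple_cone u -> simple_cone v ->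
  u + v = t *: ev Delta`_j -> exists2 c, 0 <= c & u = c *: ev Delta`_j.
Proof.
move=> [m hm eu] [l hl el] huv.
have hdelta : \sum_(i < r) ((i == j)%:R * t) *: ev Delta`_i = t *: ev Delta`_j.
  by rewrite (bigD1 j) //= eqxx mul1r big1 ?addr0 // => i /negbTE ->; rewrite mul0r scale0r.
have e : forall i, m i + l i - (i == j)%:R * t = 0.
  apply: simple_roots_free; under eq_bigr do rewrite scalerBl scalerDl.
  by rewrite sumrB big_split /= -eu -el hdelta huv subrr.
exists (m j) => //; rewrite eu (bigD1 j) //= big1 ?addr0 // => i /negbTE hij.
have := e i; rewrite hij mul0r subr0 => eml.
suff -> : m i = 0 by rewrite scale0r.
by move: (hm i) (hl i); lra.
Qed.

Lemma simple_reflX_pos a b : a \in Delta -> b \in Phip -> b != a -> reflX cor a b \in Phip.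
Proof.
move=> ha hb hba; apply/negPn/negP => hn.
have hneg : - reflX cor a b \in Phip.
  by move: (root_pos_or_neg (reflX_root (simple_root ha) (pos_root_root hb))); rewrite (negbTE hn).
have /(nthP 0) [j hj ea] := ha.
have hsum : ev b + ev (- reflX cor a b) = vdot (cv a) (ev b) *: ev Delta`_(Ordinal hj).
  by rewrite /= ea embRN embR_reflX reflVE opprB addrC subrK.
have [c hc] := simple_cone_ray (pos_root_simple_cone hb) (pos_root_simple_cone hneg) hsum.
rewrite /= ea => eb.
by have := root_proportional (simple_root ha) (pos_root_root hb) eb hc; apply/eqP.
Qed.

Lemma perm_reflX_pos_rem a : a \in Delta ->
  perm_eq (map (reflX cor a) (rem a Phip)) (rem a Phip).
Proof.
move=> ha; have haP := simple_root ha.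
apply: perm_map_stable (rem_uniq a uniq_pos) (inv_inj (reflXK haP)) _ => b.
rewrite !(mem_rem_uniq _ uniq_pos) => /andP [hba hb] /=.
rewrite inE simple_reflX_pos // andbT; apply: contraTneq hb => e.
by rewrite -(reflXK haP b) e reflX_self // (pos_rootN (simple_pos ha)).
Qed.

(** * Dominant representatives and duality *)

Definition neg_count (u : V) := count (fun b => vdot (cv b) u < 0) Phip.

Lemma neg_count_reflV a u : a \in Delta -> vdot (cv a) u < 0 ->
  neg_count (reflV cor a u) = (neg_count u).-1.
Proof.
move=> ha hu; have haP := simple_root ha.
rewrite /neg_count !(permP (perm_to_rem (simple_pos ha))) /= hu.
have -> : vdot (cv a) (reflV cor a u) < 0 = false.
  by rewrite vdot_reflV corefl_coroot // vdotNl oppr_lt0 ltNge ltW.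
rewrite -[in RHS](permP (perm_reflX_pos_rem ha)) count_map add0n add1n /=.
apply: eq_in_count => b.
by rewrite (mem_rem_uniq _ uniq_pos) => /andP [_ hb] /=; rewrite vdot_cv_reflV // pos_root_root.
Qed.

Lemma coroot_ge0_formV a u : a \in Phi -> (0 <= vdot (cv a) u) = (0 <= formV u (ev a)).
Proof.
move=> ha; rewrite -(pmulr_lge0 _ (formV_root_gt0 ha)) formV_coroot //.
by rewrite pmulr_rge0.
Qed.

Lemma dominant_simple u : {in Delta, forall a, 0 <= vdot (cv a) u} ->
  {in Phip, forall b, 0 <= vdot (cv b) u}.
Proof.
move=> hD b hb; rewrite coroot_ge0_formV ?pos_root_root //.
have [m hm ->] := pos_root_simple_cone hb; rewrite linear_sum; apply: sumr_ge0 => i _.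
by rewrite linearZ mulr_ge0 // -coroot_ge0_formV ?simple_nth_root // hD ?mem_nth.
Qed.

Definition pos_cone (u : V) := exists c : 'I_(size Phip) -> R, (forall i, 0 <= c i) /\
  u = \sum_(i < size Phip) c i *: ev Phip`_i.

Lemma pos_cone0 : pos_cone 0.
Proof. by exists (fun _ => 0); split => //; rewrite big1 // => i _; rewrite scale0r. Qed.
Lemma pos_coneD u v : pos_cone u -> pos_cone v -> pos_cone (u + v).
Proof.
move=> [k [hk ->]] [l [hl ->]]; exists (fun i => k i + l i); split.
  by move=> i; rewrite addr_ge0.
by rewrite -big_split; apply: eq_bigr => i _; rewrite scalerDl.
Qed.
Lemma pos_cone_pos t a : 0 <= t -> a \in Phip -> pos_cone (t *: ev a).
Proof.
move=> ht ha; have hi : (index a Phip < size Phip)%N by rewrite index_mem.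
exists (fun i => (i == Ordinal hi)%:R * t); split => [i|]; first by rewrite mulr_ge0.
rewrite (bigD1 (Ordinal hi)) //= eqxx mul1r nth_index // big1 ?addr0 //.
by move=> i /negbTE ->; rewrite mul0r scale0r.
Qed.
Lemma simple_cone_pos u : simple_cone u -> pos_cone u.
Proof.
move=> [k hk ->]; apply: (big_ind pos_cone pos_cone0 pos_coneD) => i _.
exact/pos_cone_pos/simple_pos/mem_nth.
Qed.
Lemma pos_cone_antidom v nu : pos_cone v -> antidomL Phip nu -> vdot (ev nu) v <= 0.
Proof.
move=> [c [hc ->]] hnu; rewrite linear_sum; apply: sumr_le0 => i _.
by rewrite linearZ /= vdotC -pairZE mulr_ge0_le0 // lerz0 hnu // mem_nth.
Qed.

(* Reflecting in a simple root [a] with [<a^v, u> < 0] decreases [neg_count u]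
   and moves [u] up by a nonnegative multiple of [a]. *)
Lemma dominant_in_orbit u : exists w, [/\ inW Phi w, domV Phip cor (actV cor w u)
  & pos_cone (actV cor w u - u)].
Proof.
move: {2}(neg_count u) (erefl (neg_count u)) => N.
elim: N u => [|N IH] u hN.
  exists [::]; split => //=; last by rewrite subrr; exact: pos_cone0.
  move=> a ha; rewrite pairRE leNgt; apply/negP => hneg.
  move: hN; rewrite /neg_count => /eqP; rewrite -leqn0 leqNgt -has_count.
  by case/negP; apply/hasP; exists a.
have [a ha hau] : exists2 a, a \in Delta & vdot (cv a) u < 0.
  have /hasP [b hb hbu] : has (fun b => vdot (cv b) u < 0) Phip.
    by rewrite has_count -/(neg_count u) hN.
  apply/hasP; apply/negPn/negP => /hasPn hD.
  by move: hbu; rewrite ltNge dominant_simple // => a /hD; rewrite -leNgt.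
have hN' : neg_count (reflV cor a u) = N by rewrite neg_count_reflV // hN.
have [w [hw hd hc]] := IH _ hN'.
exists (w ++ [:: a]); rewrite /actV foldr_cat /=; split => //.
  by rewrite /inW all_cat -/(inW Phi w) hw /= simple_root.
rewrite -(subrK (reflV cor a u) (foldr _ _ w)) -addrA; apply: pos_coneD hc _.
rewrite reflVE addrAC subrr add0r -scaleNr.
by apply: pos_cone_pos; [rewrite oppr_ge0 ltW | apply: simple_pos].
Qed.

Definition simple_mx : 'M[R]_(r, n) := \matrix_(i, j) ev Delta`_i 0 j.

Lemma row_simple_mx i : row i simple_mx = ev Delta`_i.
Proof. by apply/rowP => j; rewrite !mxE. Qed.
Lemma mul_simple_mx (x : 'rV_r) : x *m simple_mx = \sum_(i < r) x 0 i *: ev Delta`_i.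
Proof. by rewrite mulmx_sum_row; apply: eq_bigr => i _; rewrite row_simple_mx. Qed.

(* Farkas' lemma for the cone over the linearly independent simple roots: test
   against the cokernel of [simple_mx] and against the columns of a right inverse. *)
Lemma simple_cone_dual v :
  (forall k, {in Delta, forall a, 0 <= vdot (ev a) k} -> 0 <= vdot v k) -> simple_cone v.
Proof.
move=> hv.
have hfree : row_free simple_mx.
  apply: inj_row_free => x; rewrite mul_simple_mx => /simple_roots_free h.
  by apply/rowP => i; rewrite mxE h.
have hsub : (v <= simple_mx)%MS.
  rewrite submxE; apply/eqP/rowP => j; rewrite [RHS]mxE -vdot_row_mx.
  set K := \row_l _.
  have hK a : a \in Delta -> vdot (ev a) K = 0.
    move=> /(nthP 0) [i hi <-]; rewrite vdot_row_mx -(row_simple_mx (Ordinal hi)).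
    by rewrite -row_mul mulmx_coker !mxE.
  apply/eqP; rewrite eq_le -oppr_ge0 -linearN; apply/andP; split; apply: hv => a ha.
    by rewrite linearN /= hK // oppr0.
  by rewrite hK.
have [D eD] := submxP hsub; have [B eB] := row_freeP hfree.
exists (fun i => D 0 i); last by rewrite eD mul_simple_mx.
move=> i; have -> : D 0 i = (v *m B) 0 i by rewrite eD -mulmxA eB mulmx1.
rewrite -vdot_row_mx hv //.
move=> _ /(nthP 0) [l hl <-]; rewrite vdot_row_mx -(row_simple_mx (Ordinal hl)).
by rewrite -row_mul eB !mxE; case: (_ == _).
Qed.

(* The antidominant coweights [- floor (N k) - M f] approximate the ray
   [- R_{>=0} k]; the shift by [M f] keeps them antidominant. *)
Lemma antidom_dual v : (forall mu, antidomL Phip mu -> vdot (ev mu) v <= 0) ->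
  forall k, {in Phip, forall a, 0 <= vdot (ev a) k} -> 0 <= vdot v k.
Proof.
move=> hv k hk.
have [M hM] : exists M : int, {in Phip, forall a, l1norm (ev a) <= M%:~R}.
  exists (Num.floor (\sum_(a <- Phip) l1norm (ev a)) + 1) => a ha.
  apply: le_trans (ltW (floorD1_gt _)).
  rewrite (perm_big _ (perm_to_rem ha)) big_cons lerDl.
  by apply: sumr_ge0 => b _; apply: l1norm_ge0.
pose mu (N : nat) : X := - floor_row (N%:R *: k) - M *: f.
have anti N : antidomL Phip (mu N).
  move=> a ha; rewrite -(lerz0 R) pairZE /mu embRB embRN embRZ linearB linearN linearZ /=.
  have := vdot_floor_row (ev a) (N%:R *: k); rewrite linearZ /= ler_norml => /andP [h1 _].
  have hf : 1 <= vdot (ev a) (ev f) by rewrite -pairZE ler1z -gtz0_ge1 pos_root_f_gt0.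
  have hNk : 0 <= N%:R * vdot (ev a) k by rewrite mulr_ge0 ?hk.
  have hM0 : 0 <= M%:~R :> R by apply: le_trans (hM a ha); apply: l1norm_ge0.
  have := ler_wpM2l hM0 hf; have := hM a ha; rewrite mulr1; lra.
have bound N : - (N%:R * vdot v k) <= l1norm v + M%:~R * vdot (ev f) v.
  have := hv _ (anti N); rewrite /mu embRB embRN embRZ vdotBl vdotNl vdotZl.
  have := vdot_floor_row v (N%:R *: k); rewrite vdotC linearZ /= ler_norml.
  by case/andP => _; lra.
rewrite leNgt; apply/negP => hneg.
have [N hN] : exists N : nat, l1norm v + M%:~R * vdot (ev f) v < N%:R * - vdot v k.
  exists (Num.trunc ((l1norm v + M%:~R * vdot (ev f) v) / - vdot v k)).+1.
  by rewrite -ltr_pdivrMr ?oppr_gt0 // truncnS_gt.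
by have := bound N; rewrite -mulrN; lra.
Qed.

Lemma pos_cone_dual v : (forall mu, antidomL Phip mu -> vdot (ev mu) v <= 0) -> pos_cone v.
Proof.
move=> hv; apply/simple_cone_pos/simple_cone_dual => k hk; apply: antidom_dual => // a ha.
have [m hm ->] := pos_root_simple_cone ha; rewrite vdot_suml; apply: sumr_ge0 => i _.
by rewrite vdotZl mulr_ge0 // hk // mem_nth.
Qed.

(** * The set V^xi *)

Lemma sum_abs_pairing_pos nu :
  \sum_(a <- Phi) `|pairZ a nu| = 2 * \sum_(a <- Phip) `|pairZ a nu|.
Proof.
rewrite (perm_big _ perm_roots_pos_neg) big_cat big_map /= mulr2n mulrDl mul1r.
by congr (_ + _); apply: eq_bigr => a _; rewrite pairZNl normrN.
Qed.

Lemma sum_inversions_pairing w lam : inW Phi w -> antidomL Phip (actL cor w lam) ->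
  2 * \sum_(a <- Phip | actX cor w a \notin Phip) pairZ a lam =
  \sum_(a <- Phip) pairZ a lam - \sum_(a <- Phip) pairZ a (actL cor w lam).
Proof.
move=> hw hanti; set mu := actL cor w lam.
have abs_mu : \sum_(a <- Phip) `|pairZ a mu| = - \sum_(a <- Phip) pairZ a mu.
  by rewrite -sumrN; apply: eq_big_seq => a ha; rewrite ler0_norm ?hanti.
have abs_lam : \sum_(a <- Phip) `|pairZ a lam| = \sum_(a <- Phip) `|pairZ a mu|.
  apply: (@mulfI _ 2) => //.
  by rewrite -!sum_abs_pairing_pos sum_abs_pairing_act.
rewrite -abs_mu -abs_lam big_mkcond mulr_sumr -big_split /=; apply: eq_big_seq => a ha.
have hwa := actX_root hw (pos_root_root ha).
have ea : pairZ (actX cor w a) mu = pairZ a lam by rewrite pairZ_act.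
case: ifPn => hn; last first.
  have := hanti _ (negbNE hn); rewrite ea => h.
  by rewrite ler0_norm // mulr0 subrr.
have hneg : - actX cor w a \in Phip by move: (root_pos_or_neg hwa); rewrite (negbTE hn).
have := hanti _ hneg; rewrite pairZNl ea oppr_le0 => h.
by rewrite ger0_norm // mulr2n mulrDl mul1r.
Qed.

Definition orbit_pairing_ge (x y : V) := forall w nu, inW Phi w -> antidomL Phip nu ->
  pairR nu x <= pairR nu (actV cor w y).

Lemma dom_le_pairing y x : dom_le Phi Phip cor y x <-> orbit_pairing_ge x y.
Proof.
split=> [hD w nu hw hnu | hQ w hw _].
  have [w' [hw' hd hc]] := dominant_in_orbit (actV cor w y).
  have hww' : inW Phi (w' ++ w) by rewrite /inW all_cat -!/(inW Phi _) hw' hw.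
  have := hD _ hww'; rewrite /actV foldr_cat -/(actV cor w y) -/(actV cor w' _) => /(_ hd) hle.
  have := pos_cone_antidom (pos_coneD hle hc) hnu.
  by rewrite addrA subrK linearB /= -!pairRE subr_le0.
change (pos_cone (x - actV cor w y)); apply: pos_cone_dual => mu hmu.
by have := hQ w mu hw hmu; rewrite linearB /= -!pairRE subr_le0.
Qed.

Section ShiftedWeight.
Variables (d : nat) (xi : X).
Local Notation x := ((d%:R : R) *: etaV R Phip + embR R xi).

Lemma pairR_shift nu :
  pairR nu x = d%:R / 2 * (\sum_(a <- Phip) pairZ a nu)%:~R + (pairZ xi nu)%:~R.
Proof.
rewrite pairRE /etaV linearD linearZ linearZ linear_sum /= rmorph_sum mulrA.
rewrite [X in _ + X = _]vdotC -pairZE pairZC; congr (_ * _ + _).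
by apply: eq_bigr => a _; rewrite vdotC -pairZE.
Qed.

Lemma val_gammaE w lam : inW Phi w -> antidomL Phip (actL cor w lam) ->
  val_gamma R Phip cor d xi w lam = pairR (actL cor w lam) x - pairR lam x.
Proof.
move=> hw ha; rewrite /val_gamma !pairR_shift -rmorph_sum /= intrB.
have := congr1 (fun m : int => m%:~R : R) (sum_inversions_pairing hw ha).
rewrite /= intrM intrB; set S := (\sum_(a <- Phip | _) _)%:~R => e.
have -> : S = 2^-1 * (2 * S) by rewrite mulKf ?pnatr_eq0.
by rewrite e; ring.
Qed.

Lemma V_xi_pairing z : V_xi Phi Phip cor d xi z <-> orbit_pairing_ge x (z + x).
Proof.
split=> [hV w nu hw hnu | hQ lam w hw hanti].
  have := hV (actL cor (rev w) nu) w hw; rewrite actL_revK // => /(_ hnu).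
  have -> : pairR nu (actV cor w (z + x)) = pairR (actL cor (rev w) nu) (z + x).
    by rewrite -{1}(actL_revK nu hw) pairR_act.
  by rewrite val_gammaE ?actL_revK // (pairRD _ z); lra.
rewrite val_gammaE //; have := hQ w _ hw hanti.
by rewrite pairR_act // (pairRD _ z); lra.
Qed.

End ShiftedWeight.

End PositiveSystem.
End RootDatum.

Theorem lemma2p7 (R : realType) (n : nat) (Phi Phip : seq 'rV[int]_n)
  (cor : 'rV[int]_n -> 'rV[int]_n) (d : nat) (xi : 'rV[int]_n) :
  root_datum Phi cor -> positive_system Phi Phip -> (0 < d)%N ->
  dominant_int Phip cor xi ->
  forall z : 'rV[R]_n,
    V_xi Phi Phip cor d xi z <->
    dom_le Phi Phip cor (z + ((d%:R : R) *: etaV R Phip + embR R xi))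
                        ((d%:R : R) *: etaV R Phip + embR R xi).
Proof.
move=> rd [uniq_pos [f [root_f_neq0 pos_rootE]]] _ _ z.
rewrite (V_xi_pairing rd uniq_pos root_f_neq0 pos_rootE).
by rewrite (dom_le_pairing rd uniq_pos root_f_neq0 pos_rootE).
Qed.
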